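(* Let $H = C_5 + C_5 + C_5 + C_5 + C_5 + C_5$ be the Zykov sum of six disjoint $5$-cycles. Let $v\in V(H)$ and let $S$ be the subgraph of $H$ induced by the vertices of the five $5$-cycles not containing $v$. Suppose the edges of $H$ are colored in three colors $1,2,3$ with no monochromatic triangle. Then for each color $i\in\{1,2,3\}$ we have $N_i(v)\cap V(S)\neq\emptyset$, where $N_i(v)$ is the set of vertices $u$ adjacent to $v$ such that the edge $vu$ has color $i$.
   Context: All graphs are finite, undirected, without loops or multiple edges. The Zykov sum $G_1+G_2$ of two vertex-disjoint graphs is obtained by joining every vertex of $G_1$ to every vertex of $G_2$. *)

From mathcomp Require Import all_boot.
Set Implicit Arguments. Unset Strict Implicit. Unset Printing Implicit Defensive.

(* Vertices of H = C5 + C5 + C5 + C5 + C5 + C5: pairs (k, j) with k : 'I_6 the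
   index of the 5-cycle and j : 'I_5 the position on that cycle. *)
Definition HV := ('I_6 * 'I_5)%type.

Definition c5adj (a b : 'I_5) : bool :=
  ((a.+1 %% 5) == b) || ((b.+1 %% 5) == a).

Definition Hadj (x y : HV) : bool :=
  if x.1 == y.1 then c5adj x.2 y.2 else true.

(* An edge 3-colouring is a symmetric colour function (only its values on
   edges matter). *)
Definition edge_coloring (c : HV -> HV -> 'I_3) : Prop :=
  forall x y, Hadj x y -> c x y = c y x.

Definition no_mono_triangle (c : HV -> HV -> 'I_3) : Prop :=
  forall x y z, Hadj x y -> Hadj y z -> Hadj x z ->
    ~ (c x y = c y z /\ c y z = c x z).

Definition Ncol (c : HV -> HV -> 'I_3) (i : 'I_3) (v : HV) : {set HV} :=
  [set u | Hadj v u && (c v u == i)].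

Definition VS (v : HV) : {set HV} := [set u | u.1 != v.1].

From mathcomp Require Import all_boot zify.
Set Implicit Arguments. Unset Strict Implicit. Unset Printing Implicit Defensive.

(* Suppose no edge from v to S has colour i. On each 5-cycle of S the vertices
   are then 2-coloured by the colour of their edge to v, and since C5 is an
   odd cycle some edge of it is monochromatic. By pigeonhole three of the five
   cycles carry such an edge of the same colour; their six endpoints form a
   clique K6 joined to v in a single colour. That colour cannot occur inside
   the K6, which is therefore 2-coloured and contains a monochromatic triangle
   since R(3,3) = 6. *)

Definition clique (T : finType) (e : rel T) (K : {set T}) : Prop :=
  {in K &, forall x y, x != y -> e x y}.

Lemma ordS_neq n (i : 'I_n.+2) : ordS i != i.
Proof.
rewrite -val_eqE /=; case: (ltngtP i.+1 n.+2) (ltn_ord i) => // [lt_i _|eq_i _].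
  by rewrite modn_small // gtn_eqF.
by rewrite eq_i modnn; case: eq_i => ->.
Qed.

Lemma val_iter_ordS n (x : 'I_n) k : val (iter k (@ordS n) x) = (x + k) %% n.
Proof.
elim: k => [|k IHk] /=; first by rewrite addn0 modn_small.
by rewrite IHk -addn1 modnDml addn1 addnS.
Qed.

Lemma iter_ordS_id n (x : 'I_n) : iter n (@ordS n) x = x.
Proof. by apply: val_inj; rewrite val_iter_ordS modnDr modn_small. Qed.

Lemma odd_cycle_mono_edge n (q : 'I_n -> bool) :
  odd n -> exists x, q (ordS x) = q x.
Proof.
move=> n_odd; pose x0 : 'I_n := Ordinal (odd_gt0 n_odd).
suff: [exists x, q (ordS x) == q x] by case/existsP=> x /eqP; exists x.
apply: contraT => /existsPn alt.
have flip y : q (ordS y) = ~~ q y by move: (alt y); case: (q y); case: (q _).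
have q_iter k : q (iter k (@ordS n) x0) = odd k (+) q x0.
  by elim: k => //= k IHk; rewrite flip IHk addNb.
by move: (q_iter n); rewrite iter_ordS_id n_odd; case: (q x0).
Qed.

Lemma ramsey_triangle (T : finType) (A : {set T}) (E : rel T) :
  5 < #|A| -> exists x y z, [/\ x \in A, y \in A & z \in A] /\
    [/\ x != y, y != z, x != z & E x y = E y z /\ E y z = E x z].
Proof.
move=> A_big; have [x0 Ax0] : exists x0, x0 \in A by apply/card_gt0P; lia.
pose B b := [set y in A :\ x0 | E x0 y == b].
have card_B : #|B true| + #|B false| = #|A :\ x0|.
  rewrite -(cardsID [set y | E x0 y] (A :\ x0)).
  by congr (_ + _); apply: eq_card => y; rewrite !inE;
    case: (E x0 y); rewrite ?andbT ?andbF.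
have := cardsD1 x0 A; rewrite Ax0 => card_A.
have [b /card_gt2P[y1 [y2 [y3 [[By1 By2 By3] [n12 n23 n31]]]]]] :
    exists b, 2 < #|B b|.
  by case: (ltnP 2 #|B true|) => ?; [exists true | exists false; lia].
move: By1 By2 By3; rewrite !inE => /andP[/andP[nx1 Ay1] /eqP e1]
  /andP[/andP[nx2 Ay2] /eqP e2] /andP[/andP[nx3 Ay3] /eqP e3].
rewrite ![_ == x0]eq_sym in nx1 nx2 nx3.
have [e12|n12b] := eqVneq (E y1 y2) b.
  by exists x0, y1, y2; rewrite nx1 nx2 n12 e1 e2 e12.
have [e23|n23b] := eqVneq (E y2 y3) b.
  by exists x0, y2, y3; rewrite nx2 nx3 n23 e2 e3 e23.
have [e13|n13b] := eqVneq (E y1 y3) b.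
  by exists x0, y1, y3; rewrite nx1 nx3 eq_sym n31 e1 e3 e13.
exists y1, y2, y3; rewrite n12 n23 eq_sym n31; do 2!split=> //.
have neg_b e : e != b -> e = ~~ b by case: e; case: (b).
by rewrite (neg_b _ n12b) (neg_b _ n23b) (neg_b _ n13b).
Qed.

Lemma eq_ord3_outside (d a x y : 'I_3) :
  a != d -> x != d -> y != d -> (x == a) = (y == a) -> x = y.
Proof.
move: d a x y; do 4!case=> [[|[|[|?]]] ?] //=.
all: by move=> *; apply: val_inj.
Qed.

Lemma mono_star_clique_small (c : HV -> HV -> 'I_3) (v : HV) (K : {set HV}) :
  no_mono_triangle c -> clique Hadj K -> {in K, forall u, Hadj v u} ->
  {in K &, forall u u', c v u = c v u'} -> #|K| <= 5.
Proof.
move=> no_mono K_clique vK K_star; rewrite leqNgt; apply/negP => K_big.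
have [u0 Ku0] : exists u0, u0 \in K by apply/card_gt0P; lia.
pose col := c v u0; pose d := ordS col.
have [x [y [z [[Kx Ky Kz] [nxy nyz nxz [exy eyz]]]]]] :=
  ramsey_triangle (fun u u' => c u u' == d) K_big.
have avoid_col u u' : u \in K -> u' \in K -> u != u' -> c u u' != col.
  move=> Ku Ku' nuu'; apply/eqP => cuu'.
  apply: (no_mono v u u' (vK _ Ku) (K_clique _ _ Ku Ku' nuu') (vK _ Ku')).
  by rewrite cuu' /col (K_star u0 u) // (K_star u u').
apply: (no_mono x y z (K_clique _ _ Kx Ky nxy) (K_clique _ _ Ky Kz nyz)
  (K_clique _ _ Kx Kz nxz)).
by split; apply: (eq_ord3_outside (ordS_neq col)); rewrite ?avoid_col.
Qed.

Lemma mono_clique_outside (p : HV -> bool) (w : 'I_6) :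
  exists b (K : {set HV}), [/\ 5 < #|K|, clique Hadj K,
    {in K, forall u, u.1 != w} & {in K, forall u, p u = b}].
Proof.
have [x mono] :=
  fin_all_exists (fun t => odd_cycle_mono_edge (fun y => p (t, y)) isT).
pose T b := [set t in [set~ w] | p (t, x t) == b].
have card_T : #|T true| + #|T false| = #|[set~ w]|.
  rewrite -(cardsID [set t | p (t, x t)] [set~ w]).
  by congr (_ + _); apply: eq_card => t; rewrite !inE;
    case: (p _); rewrite ?andbT ?andbF.
have := cardsC1 w; rewrite card_ord => card_w.
have [b T_big] : exists b, 2 < #|T b|.
  by case: (ltnP 2 #|T true|) => ?; [exists true | exists false; lia].
pose g (ts : 'I_6 * bool) := (ts.1, if ts.2 then ordS (x ts.1) else x ts.1).
exists b, (g @: setX (T b) [set: bool]); split.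
- rewrite card_in_imset ?cardsX ?cardsT ?card_bool; first lia.
  move=> [t s] [t' s'] _ _ [<-]; rewrite /=.
  by case: s; case: s' => // /eqP;
    rewrite ?[x t == _]eq_sym (negbTE (ordS_neq (x t))).
- move=> _ _ /imsetP[[t s] _ ->] /imsetP[[t' s'] _ ->].
  rewrite /g /Hadj /= => neq; case: (t =P t') neq => [<-|] //.
  by case: s; case: s' => //=; rewrite ?eqxx // /c5adj eqxx ?orbT.
- by move=> _ /imsetP[[t s] /setXP[+ _] ->]; rewrite !inE => /andP[].
- move=> _ /imsetP[[t s] /setXP[+ _] ->]; rewrite !inE /= => /andP[_ /eqP <-].
  by case: s; rewrite //= mono.
Qed.

Theorem lemma4 (c : HV -> HV -> 'I_3) (v : HV) :
  edge_coloring c -> no_mono_triangle c ->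
  forall i : 'I_3, Ncol c i v :&: VS v != set0.
Proof.
move=> _ no_mono i; apply/negP => /eqP N_empty.
have avoid_i u : u.1 != v.1 -> c v u != i.
  move=> uS; apply/eqP => cvu.
  have : u \in Ncol c i v :&: VS v.
    by rewrite !inE /Hadj eq_sym (negbTE uS) cvu eqxx.
  by rewrite N_empty inE.
have [b [K [K_big K_clique KS Kb]]] :=
  mono_clique_outside (fun u => c v u == ordS i) v.1.
have vK u : u \in K -> Hadj v u.
  by move=> /KS uS; rewrite /Hadj eq_sym (negbTE uS).
suff: #|K| <= 5 by rewrite leqNgt K_big.
apply: (mono_star_clique_small no_mono K_clique vK) => u u' Ku Ku'.
apply: (eq_ord3_outside (ordS_neq i)); rewrite ?avoid_i ?KS //.
by rewrite (Kb _ Ku) (Kb _ Ku').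
Qed.
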